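(* If $C\subseteq\omega$ is $\mathrm{REA}[\omega]$ and $C$ is not computable, then $C$ and $\emptyset''$ do not form a minimal pair: there is a non-computable set $B$ with $B\le_T C$ and $B\le_T\emptyset''$ (i.e. $\deg(C)\wedge\mathbf{0}''\neq\mathbf{0}$).
   Context: Let $\langle x,y\rangle$ denote a standard computable pairing function. For $X\subseteq\omega$, $X^{[n]}=\{y:\langle n,y\rangle\in X\}$ and $X^{[<n]}=\{\langle m,y\rangle\in X: m<n\}$ (with $X^{[<0]}=\emptyset$). $W_e^Z$ is the $e$-th set c.e. relative to $Z$. A set $C$ is $\mathrm{REA}[\omega]$ iff there is a computable function $f$ such that for every $n$, $C^{[n]}=W^{C^{[<n]}}_{f(n)}$. $\emptyset''$ is the double jump of the empty set. *)

(* A self-contained model of oracle computability: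
   Kleene-style unary partial recursive functionals with an oracle,
   coded by natural numbers via Cantor pairing. Sets are predicates nat -> Prop. *)
From Stdlib Require Import Arith.

Definition pair (x y : nat) : nat := (x + y) * (x + y + 1) / 2 + y.

(* Syntax of oracle partial recursive functionals (unary, arguments coded by pair). *)
Inductive code : Type :=
  | CZero : code
  | CSucc : code
  | CId : code
  | CFst : code
  | CSnd : code
  | COracle : code
  | CPair : code -> code -> code
  | CComp : code -> code -> code
  | CPrim : code -> code -> code (* h<x,0> = f x ; h<x,n+1> = g <x,<n,h<x,n>>> *)
  | CMu : code -> code.          (* x |-> least n with f<x,n> = 0 (all earlier defined) *)

Inductive eval (X : nat -> Prop) : code -> nat -> nat -> Prop :=
  | ev_zero x : eval X CZero x 0
  | ev_succ x : eval X CSucc x (S x)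
  | ev_id x : eval X CId x x
  | ev_fst x y : eval X CFst (pair x y) x
  | ev_snd x y : eval X CSnd (pair x y) y
  | ev_or1 x : X x -> eval X COracle x 1
  | ev_or0 x : ~ X x -> eval X COracle x 0
  | ev_pair f g x a b : eval X f x a -> eval X g x b -> eval X (CPair f g) x (pair a b)
  | ev_comp f g x a b : eval X g x a -> eval X f a b -> eval X (CComp f g) x b
  | ev_prim0 f g x v : eval X f x v -> eval X (CPrim f g) (pair x 0) v
  | ev_primS f g x n w v : eval X (CPrim f g) (pair x n) w ->
      eval X g (pair x (pair n w)) v -> eval X (CPrim f g) (pair x (S n)) v
  | ev_mu f x n : eval X f (pair x n) 0 ->
      (forall m, m < n -> exists v, eval X f (pair x m) (S v)) ->
      eval X (CMu f) x n.

Fixpoint encode (c : code) : nat :=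
  match c with
  | CZero => pair 0 0
  | CSucc => pair 1 0
  | CId => pair 2 0
  | CFst => pair 3 0
  | CSnd => pair 4 0
  | COracle => pair 5 0
  | CPair f g => pair 6 (pair (encode f) (encode g))
  | CComp f g => pair 7 (pair (encode f) (encode g))
  | CPrim f g => pair 8 (pair (encode f) (encode g))
  | CMu f => pair 9 (encode f)
  end.

(* W_e^X : the e-th set c.e. relative to X (indices not coding a program give the empty set). *)
Definition W (X : nat -> Prop) (e : nat) : nat -> Prop :=
  fun x => exists c v, encode c = e /\ eval X c x v.

Definition empty_set : nat -> Prop := fun _ => False.

Definition computes (X : nat -> Prop) (c : code) (A : nat -> Prop) : Prop :=
  forall x, (A x -> eval X c x 1) /\ (~ A x -> eval X c x 0).

Definition turing_le (A B : nat -> Prop) : Prop := exists c, computes B c A.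

Definition computable (A : nat -> Prop) : Prop := exists c, computes empty_set c A.

Definition computable_fun (f : nat -> nat) : Prop :=
  exists c, forall n, eval empty_set c n (f n).

Definition jump (X : nat -> Prop) : nat -> Prop := fun e => W X e e.

Definition zero_double_jump : nat -> Prop := jump (jump empty_set).

Definition column (X : nat -> Prop) (n : nat) : nat -> Prop := fun y => X (pair n y).
Definition below (X : nat -> Prop) (n : nat) : nat -> Prop :=
  fun z => exists m y, z = pair m y /\ m < n /\ X z.

Definition REA_omega (C : nat -> Prop) : Prop :=
  exists f : nat -> nat, computable_fun f /\
    forall n y, column C n y <-> W (below C n) (f n) y.

(* Write C^[<n] for [below C n]. If some C^[<n] is computable while C^[n] is not, take
   B = C^[n]: it is c.e. in a computable set, hence computable in 0' and a fortiori in 0''.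
   Otherwise every C^[<n] is computable, by induction on n, and 0'' can run this induction
   uniformly. From an index of C^[<k] it gets an index q of C^[k] as a c.e. set, and
   looks for the least program b computing W_q; "b computes W_q" is a Pi^0_1 question
   relative to 0', which 0'' answers. Joining the two programs gives an index of C^[<k+1],
   so C <=_T 0'' and B = C works. *)

From Stdlib Require Import Arith Bool Lia Classical ClassicalEpsilon.

Definition triangle (s : nat) : nat := s * (s + 1) / 2.

Lemma pair_triangle x y : pair x y = triangle (x + y) + y.
Proof. reflexivity. Qed.

Lemma triangle_S s : triangle (S s) = triangle s + S s.
Proof.
  unfold triangle. replace (S s * (S s + 1)) with (s * (s + 1) + S s * 2) by lia.
  rewrite Nat.div_add by lia. reflexivity.
Qed.

Lemma triangle_ge s : s <= triangle s.
Proof. induction s; [unfold triangle; simpl; lia | rewrite triangle_S; lia]. Qed.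

Lemma triangle_mono s1 s2 : s1 <= s2 -> triangle s1 <= triangle s2.
Proof. induction 1; [lia | rewrite triangle_S; lia]. Qed.

Lemma pair_inj a b c d : pair a b = pair c d -> a = c /\ b = d.
Proof.
  rewrite !pair_triangle. intros H.
  destruct (lt_eq_lt_dec (a + b) (c + d)) as [[Hl|He]|Hl].
  - pose proof (triangle_S (a + b)). pose proof (triangle_mono _ _ Hl). lia.
  - rewrite He in H. lia.
  - pose proof (triangle_S (c + d)). pose proof (triangle_mono _ _ Hl). lia.
Qed.

(* Inverse of the Cantor pairing, by walking along the anti-diagonals. *)
Fixpoint unpair (n : nat) : nat * nat :=
  match n with
  | 0 => (0, 0)
  | S n => let (a, b) := unpair n in
           match a with 0 => (S b, 0) | S a' => (a', S b) end
  end.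

Definition pi1 (z : nat) : nat := fst (unpair z).
Definition pi2 (z : nat) : nat := snd (unpair z).

Lemma pair_pi z : pair (pi1 z) (pi2 z) = z.
Proof.
  unfold pi1, pi2. induction z; [reflexivity|]. simpl. destruct (unpair z) as [a b].
  simpl in *. destruct a as [|a]; simpl; rewrite !pair_triangle in *.
  - replace (S b + 0) with (S b) by lia. rewrite triangle_S.
    replace (0 + b) with b in IHz by lia. lia.
  - replace (a + S b) with (S (a + b)) by lia.
    replace (S a + b) with (S (a + b)) in IHz by lia. lia.
Qed.

Lemma pi1_pair a b : pi1 (pair a b) = a.
Proof. pose proof (pair_pi (pair a b)) as H. apply pair_inj in H. tauto. Qed.

Lemma pi2_pair a b : pi2 (pair a b) = b.
Proof. pose proof (pair_pi (pair a b)) as H. apply pair_inj in H. tauto. Qed.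

Lemma pair_ge_l a b : a <= pair a b.
Proof. rewrite pair_triangle. pose proof (triangle_ge (a + b)). lia. Qed.

Lemma pair_ge_r a b : b <= pair a b.
Proof. rewrite pair_triangle. pose proof (triangle_ge (a + b)). lia. Qed.

Lemma pair_gt_r a b : 0 < a -> b < pair a b.
Proof. rewrite pair_triangle. pose proof (triangle_ge (a + b)). lia. Qed.

Lemma pi1_le z : pi1 z <= z.
Proof. rewrite <- (pair_pi z) at 2. apply pair_ge_l. Qed.

Lemma pi2_le z : pi2 z <= z.
Proof. rewrite <- (pair_pi z) at 2. apply pair_ge_r. Qed.

Lemma pi2_lt z : 0 < pi1 z -> pi2 z < z.
Proof. intro H. rewrite <- (pair_pi z) at 2. apply pair_gt_r, H. Qed.

Ltac inj_pairs :=
  repeat match goal with H : pair _ _ = pair _ _ |- _ =>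
    apply pair_inj in H; destruct H as [? ?] end; subst.

Lemma eval_det X c : forall x v1 v2, eval X c x v1 -> eval X c x v2 -> v1 = v2.
Proof.
  induction c; intros x v1 v2 H1 H2.
  1-3: inversion H1; inversion H2; subst; auto.
  1-2: inversion H1; inversion H2; subst; inj_pairs; auto.
  - inversion H1; inversion H2; subst; tauto.
  - inversion H1; inversion H2; subst. f_equal; eauto.
  - inversion H1; inversion H2; subst.
    assert (a = a0) by eauto. subst. eauto.
  - remember (CPrim c1 c2) as cc. revert v2 H2.
    induction H1; inversion Heqcc; subst; intros v2 H2; inversion H2; subst; inj_pairs;
      try discriminate.
    + eauto.
    + match goal with H : S _ = S _ |- _ => injection H as <- end.
      assert (w = w0) by (apply IHeval1; auto). subst. eauto.
  - inversion H1; inversion H2; subst.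
    destruct (lt_eq_lt_dec v1 v2) as [[Hl|He]|Hl]; auto.
    + destruct (H8 _ Hl) as [v Hv]. specialize (IHc _ _ _ H0 Hv). discriminate.
    + destruct (H3 _ Hl) as [v Hv]. specialize (IHc _ _ _ H7 Hv). discriminate.
Qed.

Lemma encode_inj c1 : forall c2, encode c1 = encode c2 -> c1 = c2.
Proof.
  induction c1; intros c2 H; destruct c2; simpl in H; inj_pairs; try discriminate;
    f_equal; auto.
Qed.

Lemma encode_CComp_inv c a b : encode c = pair 7 (pair a b) ->
  exists c1 c2, c = CComp c1 c2 /\ encode c1 = a /\ encode c2 = b.
Proof. destruct c; simpl; intro H; inj_pairs; try discriminate; eauto 6. Qed.

Lemma encode_CMu_inv c a : encode c = pair 9 a -> exists c1, c = CMu c1 /\ encode c1 = a.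
Proof. destruct c; simpl; intro H; inj_pairs; try discriminate; eauto. Qed.

Fixpoint subst_oracle (c d : code) : code :=
  match c with
  | COracle => d
  | CPair f g => CPair (subst_oracle f d) (subst_oracle g d)
  | CComp f g => CComp (subst_oracle f d) (subst_oracle g d)
  | CPrim f g => CPrim (subst_oracle f d) (subst_oracle g d)
  | CMu f => CMu (subst_oracle f d)
  | c => c
  end.

Lemma eval_subst_oracle X Y d c x v :
  computes Y d X -> eval Y (subst_oracle c d) x v <-> eval X c x v.
Proof.
  intro Hd. revert x v. induction c; intros x v; simpl;
    try (split; intro H; inversion H; subst; econstructor; eauto; fail).
  - split; intro H.
    + destruct (Hd x) as [H1 H0]. destruct (classic (X x)) as [Hx|Hx].
      * rewrite (eval_det _ _ _ _ _ H (H1 Hx)). constructor; auto.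
      * rewrite (eval_det _ _ _ _ _ H (H0 Hx)). constructor; auto.
    + inversion H; subst; apply Hd; auto.
  - split; intro H; inversion H; subst; econstructor; try apply IHc1; try apply IHc2; eauto.
  - split; intro H; inversion H; subst; econstructor; try apply IHc1; try apply IHc2; eauto.
  - split; intro H.
    + remember (CPrim (subst_oracle c1 d) (subst_oracle c2 d)) as cc.
      induction H; inversion Heqcc; subst; econstructor; try apply IHc1; try apply IHc2; eauto.
    + remember (CPrim c1 c2) as cc.
      induction H; inversion Heqcc; subst; econstructor; try apply IHc1; try apply IHc2; eauto.
  - split; intro H; inversion H; subst; constructor; try apply IHc; auto;
      intros m Hm; match goal with Hf : forall m, m < _ -> _ |- _ =>
        destruct (Hf m Hm) as [w Hw] end; exists w; apply IHc; auto.
Qed.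

Fixpoint oracle_free (c : code) : Prop :=
  match c with
  | COracle => False
  | CPair f g | CComp f g | CPrim f g => oracle_free f /\ oracle_free g
  | CMu f => oracle_free f
  | _ => True
  end.

Lemma eval_oracle_free X Y c x v : oracle_free c -> eval X c x v -> eval Y c x v.
Proof.
  revert x v. induction c; intros x v Hc H; simpl in Hc;
    try (inversion H; subst; econstructor; eauto; fail).
  - contradiction.
  - destruct Hc. inversion H; subst; econstructor; eauto.
  - destruct Hc. inversion H; subst; econstructor; eauto.
  - destruct Hc. remember (CPrim c1 c2) as cc.
    induction H; inversion Heqcc; subst; econstructor; eauto.
  - inversion H; subst. constructor; auto. intros m Hm.
    match goal with Hf : forall m, m < _ -> _ |- _ => destruct (Hf m Hm) as [w Hw] end.
    eauto.
Qed.

Lemma oracle_free_subst_oracle c d : oracle_free d -> oracle_free (subst_oracle c d).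
Proof. intro Hd. induction c; simpl; auto. Qed.

Lemma computes_oracle_free c A :
  oracle_free c -> computes empty_set c A -> forall Y, computes Y c A.
Proof.
  intros Hc H Y y. destruct (H y). split; intro; apply (eval_oracle_free empty_set); auto.
Qed.

Lemma computes_CZero_empty Y : computes Y CZero empty_set.
Proof. intro x. split; [intros [] | intros; constructor]. Qed.

Definition erase_oracle (c : code) : code := subst_oracle c CZero.

Lemma oracle_free_erase_oracle c : oracle_free (erase_oracle c).
Proof. apply oracle_free_subst_oracle. exact I. Qed.

Lemma computes_erase_oracle c A :
  computes empty_set c A -> forall Y, computes Y (erase_oracle c) A.
Proof.
  intro Hc. apply computes_oracle_free; [apply oracle_free_erase_oracle|].
  intro y. unfold erase_oracle. rewrite !(eval_subst_oracle empty_set);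
    [apply Hc | apply computes_CZero_empty ..].
Qed.

Lemma eval_value X c x v v' : eval X c x v' -> v' = v -> eval X c x v.
Proof. intros H ->; exact H. Qed.

Lemma eval_pi1 X z : eval X CFst z (pi1 z).
Proof. pose proof (ev_fst X (pi1 z) (pi2 z)) as H. rewrite pair_pi in H. exact H. Qed.

Lemma eval_pi2 X z : eval X CSnd z (pi2 z).
Proof. pose proof (ev_snd X (pi1 z) (pi2 z)) as H. rewrite pair_pi in H. exact H. Qed.

Fixpoint const_code (n : nat) : code :=
  match n with 0 => CZero | S n => CComp CSucc (const_code n) end.

Lemma eval_const_code X n x : eval X (const_code n) x n.
Proof. induction n; simpl; [constructor|]. econstructor; [apply IHn | constructor]. Qed.

Lemma eval_CPrim X f g F G :
  (forall x, eval X f x (F x)) -> (forall x n w, eval X g (pair x (pair n w)) (G x n w)) ->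
  forall z, eval X (CPrim f g) z
              (nat_rect (fun _ => nat) (F (pi1 z)) (fun n w => G (pi1 z) n w) (pi2 z)).
Proof.
  intros Hf Hg z. rewrite <- (pair_pi z) at 1. generalize (pi2 z) as n.
  induction n; simpl; [constructor; auto | econstructor; [apply IHn | apply Hg]].
Qed.

(* [leaf] tries the evaluation lemmas of previously built codes. *)
Ltac eval_with leaf :=
  repeat (first [ apply eval_const_code | leaf | apply ev_fst | apply ev_snd
                | apply eval_pi1 | apply eval_pi2 | apply ev_zero | apply ev_succ
                | apply ev_id | apply ev_pair | eapply ev_comp ]).
Ltac eval_value_with leaf := eapply eval_value; [eval_with leaf |].

Definition pred_code : code := CComp (CPrim CZero (CComp CFst CSnd)) (CPair CZero CId).

Lemma eval_pred_code X t : eval X pred_code t (Nat.pred t).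
Proof.
  eapply ev_comp; [apply ev_pair; constructor|].
  eapply eval_value; [apply (eval_CPrim X _ _ (fun _ => 0) (fun x n w => n))|].
  - constructor.
  - intros. eval_value_with fail. reflexivity.
  - rewrite pi2_pair. destruct t; reflexivity.
Qed.

Definition sub_code : code := CPrim CId (CComp pred_code (CComp CSnd CSnd)).

Lemma eval_sub_code X a b : eval X sub_code (pair a b) (a - b).
Proof.
  eapply eval_value; [apply (eval_CPrim X _ _ (fun x => x) (fun x n w => Nat.pred w))|].
  - constructor.
  - intros. eval_value_with ltac:(apply eval_pred_code). reflexivity.
  - rewrite pi1_pair, pi2_pair. induction b; simpl; lia.
Qed.

Definition iszero_code : code := CComp (CPrim (const_code 1) CZero) (CPair CZero CId).

Lemma eval_iszero_code X t : eval X iszero_code t (if t =? 0 then 1 else 0).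
Proof.
  eapply ev_comp; [apply ev_pair; constructor|].
  eapply eval_value; [apply (eval_CPrim X _ _ (fun _ => 1) (fun x n w => 0))|].
  - intros; apply eval_const_code.
  - constructor.
  - rewrite pi2_pair. destruct t; reflexivity.
Qed.

Definition cond_code : code := CPrim CSnd (CComp CFst CFst).

Lemma eval_cond_code X u v t : eval X cond_code (pair (pair u v) t) (if t =? 0 then v else u).
Proof.
  eapply eval_value; [apply (eval_CPrim X _ _ pi2 (fun x n w => pi1 x))|].
  - apply eval_pi2.
  - intros. eval_value_with fail. reflexivity.
  - rewrite !pi1_pair, !pi2_pair. destruct t; reflexivity.
Qed.

Definition eqb_code : code :=
  CComp cond_code
    (CPair (CPair CZero (CComp iszero_code (CComp sub_code (CPair CSnd CFst)))) sub_code).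

Lemma eval_eqb_code X a b : eval X eqb_code (pair a b) (if a =? b then 1 else 0).
Proof.
  eapply ev_comp.
  - apply ev_pair; [apply ev_pair|].
    + constructor.
    + eapply ev_comp; [eapply ev_comp; [apply ev_pair; [apply eval_pi2 | apply eval_pi1]|]|].
      * rewrite pi1_pair, pi2_pair. apply eval_sub_code.
      * apply eval_iszero_code.
    + apply eval_sub_code.
  - eapply eval_value; [apply eval_cond_code|].
    destruct (Nat.eqb_spec a b), (Nat.eqb_spec (a - b) 0), (Nat.eqb_spec (b - a) 0); lia.
Qed.

Ltac eval_arith :=
  first [ apply eval_pred_code | apply eval_sub_code | apply eval_iszero_code
        | apply eval_cond_code | apply eval_eqb_code ].

(* [ifz_code t z nz] computes [z x] if [t x = 0] and [nz x] otherwise. *)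
Definition ifz_code (t z nz : code) : code := CComp cond_code (CPair (CPair nz z) t).
Definition eqb_const_code (c : code) (k : nat) : code := CComp eqb_code (CPair c (const_code k)).

(* One step of the course-of-values recursion computing, from the indices [d] of a
   code [dc] and [e] of a code [c], the index of [subst_oracle c dc] ([rec] gives the
   values at smaller indices; see [subst_index_encode]). *)
Definition subst_index_step (d e : nat) (rec : nat -> nat) : nat :=
  let t := pi1 e in let r := pi2 e in
  if e =? encode COracle then d
  else if (t =? 6) || (t =? 7) || (t =? 8) then pair t (pair (rec (pi1 r)) (rec (pi2 r)))
  else if t =? 9 then pair 9 (rec r)
  else e.

Fixpoint subst_index_fuel (fuel d e : nat) : nat :=
  match fuel with
  | 0 => 0
  | S fuel => subst_index_step d e (subst_index_fuel fuel d)
  end.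

Definition subst_index (d e : nat) : nat := subst_index_fuel (S e) d e.

Lemma subst_index_step_ext d e rec1 rec2 :
  (forall i, i < e -> rec1 i = rec2 i) -> subst_index_step d e rec1 = subst_index_step d e rec2.
Proof.
  intro H. unfold subst_index_step.
  pose proof (pi2_lt e). pose proof (pi1_le (pi2 e)). pose proof (pi2_le (pi2 e)).
  destruct (e =? encode COracle); auto.
  destruct (Nat.eqb_spec (pi1 e) 6), (Nat.eqb_spec (pi1 e) 7), (Nat.eqb_spec (pi1 e) 8);
    simpl; try (rewrite !H; [reflexivity | lia | lia]).
  destruct (Nat.eqb_spec (pi1 e) 9); auto. rewrite H; auto. lia.
Qed.

Lemma subst_index_fuel_indep d fuel1 : forall fuel2 e,
  e < fuel1 -> e < fuel2 -> subst_index_fuel fuel1 d e = subst_index_fuel fuel2 d e.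
Proof.
  induction fuel1; intros fuel2 e H1 H2; [lia|]. destruct fuel2; [lia|]. simpl.
  apply subst_index_step_ext. intros. apply IHfuel1; lia.
Qed.

Lemma subst_index_unfold d e : subst_index d e = subst_index_step d e (subst_index d).
Proof.
  unfold subst_index at 1. simpl. apply subst_index_step_ext.
  intros. apply subst_index_fuel_indep; lia.
Qed.

Lemma subst_index_encode dc c : subst_index (encode dc) (encode c) = encode (subst_oracle c dc).
Proof.
  assert (H50 : forall a b, a <> 5 -> (pair a b =? encode COracle) = false).
  { intros a b Ha. apply Nat.eqb_neq. intro E. apply pair_inj in E. lia. }
  induction c; simpl encode; rewrite subst_index_unfold; unfold subst_index_step;
    rewrite ?pi1_pair, ?pi2_pair; try reflexivity;
    rewrite H50 by lia; simpl; rewrite ?pi1_pair, ?pi2_pair; simpl; congruence.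
Qed.

Lemma encode_binary_inv t a b c :
  6 <= t <= 8 -> pair t (pair a b) = encode c -> exists c1 c2, encode c1 = a /\ encode c2 = b.
Proof. intro Ht. destruct c; simpl; intro H; inj_pairs; try lia; eauto. Qed.

Lemma encode_binary_surj t a b :
  6 <= t <= 8 -> exists c, encode c = pair t (pair (encode a) (encode b)).
Proof.
  intro Ht. assert (t = 6 \/ t = 7 \/ t = 8) as [->|[->| ->]] by lia;
    [exists (CPair a b) | exists (CComp a b) | exists (CPrim a b)]; reflexivity.
Qed.

Lemma subst_index_valid dc e c' :
  subst_index (encode dc) e = encode c' -> exists c, e = encode c.
Proof.
  revert c'. induction e as [e IH] using (well_founded_induction lt_wf). intros c' H.
  rewrite subst_index_unfold in H. unfold subst_index_step in H.
  destruct (Nat.eqb_spec e (encode COracle)) as [->|]; [exists COracle; auto|].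
  pose proof (pi2_lt e). pose proof (pi1_le (pi2 e)). pose proof (pi2_le (pi2 e)).
  rewrite <- (pair_pi e), <- (pair_pi (pi2 e)).
  destruct ((pi1 e =? 6) || (pi1 e =? 7) || (pi1 e =? 8)) eqn:Ebin.
  - assert (Ht : 6 <= pi1 e <= 8).
    { repeat rewrite orb_true_iff in Ebin. rewrite !Nat.eqb_eq in Ebin. lia. }
    destruct (encode_binary_inv _ _ _ _ Ht H) as [c1 [c2 [K1 K2]]].
    destruct (IH (pi1 (pi2 e)) ltac:(lia) _ (eq_sym K1)) as [a ->].
    destruct (IH (pi2 (pi2 e)) ltac:(lia) _ (eq_sym K2)) as [b ->].
    destruct (encode_binary_surj _ a b Ht) as [c Hc]. eauto.
  - destruct (Nat.eqb_spec (pi1 e) 9) as [E9|]; [|rewrite !pair_pi; eauto].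
    symmetry in H. apply encode_CMu_inv in H. destruct H as [c1 [_ K1]].
    destruct (IH (pi2 e) ltac:(lia) _ (eq_sym K1)) as [a Ha].
    exists (CMu a). rewrite pair_pi, E9, Ha. reflexivity.
Qed.

(* [subst_history d N] codes the list [subst_index d (N-1); ...; subst_index d 0]
   as nested pairs, so that the recursion becomes primitive recursion. *)
Definition history_nth (L N i : nat) : nat := pi1 (Nat.iter (Nat.pred N - i) pi2 L).

Fixpoint subst_history (d N : nat) : nat :=
  match N with
  | 0 => 0
  | S N => pair (subst_index_step d N (history_nth (subst_history d N) N)) (subst_history d N)
  end.

Lemma subst_history_nth d N : forall i, i < N ->
  history_nth (subst_history d N) N i = subst_index d i.
Proof.
  induction N as [|N IH]; intros i Hi; [lia|].
  unfold history_nth. simpl Nat.pred. simpl subst_history. destruct (Nat.eq_dec i N) as [->|].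
  - rewrite Nat.sub_diag. simpl. rewrite pi1_pair, subst_index_unfold.
    apply subst_index_step_ext. intros. apply IH. auto.
  - replace (N - i) with (S (Nat.pred N - i)) by lia. rewrite Nat.iter_succ_r, pi2_pair.
    apply IH. lia.
Qed.

Definition iter_pi2_code : code := CPrim CId (CComp CSnd (CComp CSnd CSnd)).

Lemma eval_iter_pi2_code X L m : eval X iter_pi2_code (pair L m) (Nat.iter m pi2 L).
Proof.
  eapply eval_value; [apply (eval_CPrim X _ _ (fun x => x) (fun x n w => pi2 w))|].
  - constructor.
  - intros. eval_value_with fail. reflexivity.
  - rewrite pi1_pair, pi2_pair. induction m; simpl; congruence.
Qed.

(* Codes reading the input [<d, <N, L>>] of the step of [subst_history]. *)
Definition arg_N : code := CComp CFst CSnd.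
Definition arg_L : code := CComp CSnd CSnd.
Definition arg_tag : code := CComp CFst arg_N.
Definition arg_body : code := CComp CSnd arg_N.

Definition history_nth_code (i : code) : code :=
  CComp CFst (CComp iter_pi2_code (CPair arg_L (CComp sub_code (CPair (CComp pred_code arg_N) i)))).

Definition subst_index_step_code : code :=
  let binary := CPair arg_tag (CPair (history_nth_code (CComp CFst arg_body))
                                     (history_nth_code (CComp CSnd arg_body))) in
  let unary := CPair (const_code 9) (history_nth_code arg_body) in
  let is_binary := ifz_code (eqb_const_code arg_tag 6)
                     (ifz_code (eqb_const_code arg_tag 7) (eqb_const_code arg_tag 8) (const_code 1))
                     (const_code 1) in
  ifz_code (eqb_const_code arg_N (encode COracle))
    (ifz_code is_binary (ifz_code (eqb_const_code arg_tag 9) arg_N unary) binary)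
    CFst.

Definition subst_index_code : code :=
  CComp CFst (CComp (CPrim CZero (CPair subst_index_step_code arg_L))
                    (CPair CFst (CComp CSucc CSnd))).

Lemma eval_subst_index_step_code X d N L :
  eval X subst_index_step_code (pair d (pair N L)) (subst_index_step d N (history_nth L N)).
Proof.
  unfold subst_index_step_code, ifz_code, eqb_const_code, history_nth_code,
    arg_N, arg_L, arg_tag, arg_body.
  eval_value_with ltac:(first [eval_arith | apply eval_iter_pi2_code]).
  unfold subst_index_step, history_nth. rewrite ?pi1_pair, ?pi2_pair.
  destruct (N =? encode COracle); [reflexivity|].
  destruct (pi1 N =? 6), (pi1 N =? 7), (pi1 N =? 8), (pi1 N =? 9); reflexivity.
Qed.

Lemma eval_subst_index_code X d e : eval X subst_index_code (pair d e) (subst_index d e).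
Proof.
  eapply ev_comp; [eapply ev_comp|].
  - apply ev_pair; [apply eval_pi1 | eapply ev_comp; [apply eval_pi2 | apply ev_succ]].
  - eapply eval_value; [apply (eval_CPrim X _ _ (fun _ => 0)
      (fun x n w => pair (subst_index_step x n (history_nth w n)) w))|].
    + constructor.
    + intros. apply ev_pair; [apply eval_subst_index_step_code | eval_value_with fail; reflexivity].
    + reflexivity.
  - eapply eval_value; [apply eval_pi1|]. rewrite !pi1_pair, !pi2_pair.
    assert (Hh : forall N, nat_rect (fun _ => nat) 0
      (fun n w => pair (subst_index_step d n (history_nth w n)) w) N = subst_history d N)
      by (induction N; simpl; congruence).
    rewrite Hh, <- (subst_history_nth d (S e) e) by lia.
    unfold history_nth. simpl. rewrite Nat.sub_diag. reflexivity.
Qed.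

Opaque pair.

(* Unification must never evaluate the Cantor code of a concrete program: the numbers
   are astronomically large in unary. Inside index computations, codes of fixed programs
   are therefore written with this sealed copy of [encode]. *)
Lemma sealed_encode_spec : { f : code -> nat | forall c, f c = encode c }.
Proof. exists encode. reflexivity. Qed.

Definition sealed_encode : code -> nat := proj1_sig sealed_encode_spec.

Lemma sealed_encode_eq c : sealed_encode c = encode c.
Proof. exact (proj2_sig sealed_encode_spec c). Qed.

Definition const_index (n : nat) : nat := encode (const_code n).

Definition const_index_code : code :=
  CComp (CPrim (const_code (encode CZero))
               (CPair (const_code 7) (CPair (const_code (encode CSucc)) (CComp CSnd CSnd))))
        (CPair CZero CId).

Lemma eval_const_index_code X n : eval X const_index_code n (const_index n).
Proof.
  eapply ev_comp; [apply ev_pair; constructor|].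
  eapply eval_value; [apply (eval_CPrim X _ _ (fun _ => encode CZero)
                               (fun x n w => pair 7 (pair (encode CSucc) w)))|].
  - intros; apply eval_const_code.
  - intros. eval_value_with fail. reflexivity.
  - rewrite pi2_pair. unfold const_index. induction n; simpl in *; congruence.
Qed.

Definition chi (P : Prop) : nat := if excluded_middle_informative P then 1 else 0.

Lemma eval_COracle X x : eval X COracle x (chi (X x)).
Proof. unfold chi. destruct (excluded_middle_informative (X x)); constructor; auto. Qed.

Lemma chi_1 P : chi P = 1 <-> P.
Proof. unfold chi. destruct (excluded_middle_informative P); intuition discriminate. Qed.

Lemma chi_0 P : chi P = 0 <-> ~ P.
Proof. unfold chi. destruct (excluded_middle_informative P); intuition discriminate. Qed.

Lemma chi_01 P : chi P = 0 \/ chi P = 1.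
Proof. unfold chi. destruct (excluded_middle_informative P); auto. Qed.

Definition halt_iff_eq_code (j : nat) : code :=
  CMu (ifz_code (eqb_const_code CFst j) (const_code 1) (const_code 0)).

Lemma eval_halt_iff_eq_code X j x v : eval X (halt_iff_eq_code j) x v <-> x = j /\ v = 0.
Proof.
  assert (Hstep : forall n, eval X (ifz_code (eqb_const_code CFst j) (const_code 1) (const_code 0))
                    (pair x n) (if x =? j then 0 else 1)).
  { intro n. unfold ifz_code, eqb_const_code. eval_value_with eval_arith.
    destruct (x =? j); reflexivity. }
  split.
  - intro H. inversion H as [| | | | | | | | | | | f x' n Hzero Hbefore]; subst.
    pose proof (eval_det _ _ _ _ _ (Hstep v) Hzero).
    destruct (Nat.eqb_spec x j); [|discriminate]. split; auto.
    destruct v; auto. destruct (Hbefore 0 ltac:(lia)) as [w Hw].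
    pose proof (eval_det _ _ _ _ _ (Hstep 0) Hw). discriminate.
  - intros [-> ->]. constructor; [|intros; lia].
    eapply eval_value; [apply Hstep|]. rewrite Nat.eqb_refl. reflexivity.
Qed.

Definition index_outputs (j b y : nat) : nat :=
  pair 7 (pair (sealed_encode (halt_iff_eq_code j)) (pair 7 (pair b (const_index y)))).

Lemma index_outputs_encode j c y :
  index_outputs j (encode c) y = encode (CComp (halt_iff_eq_code j) (CComp c (const_code y))).
Proof. unfold index_outputs. rewrite !sealed_encode_eq. reflexivity. Qed.

Definition index_outputs_code (j : nat) : code :=
  CPair (const_code 7) (CPair (const_code (sealed_encode (halt_iff_eq_code j)))
    (CPair (const_code 7) (CPair CFst (CComp const_index_code CSnd)))).

Lemma eval_index_outputs_code X j b y : eval X (index_outputs_code j) (pair b y) (index_outputs j b y).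
Proof. eval_value_with ltac:(apply eval_const_index_code). reflexivity. Qed.

Definition index_halts (q y : nat) : nat := pair 7 (pair q (const_index y)).

Lemma index_halts_encode c y : index_halts (encode c) y = encode (CComp c (const_code y)).
Proof. reflexivity. Qed.

Definition index_halts_code : code := CPair (const_code 7) (CPair CFst (CComp const_index_code CSnd)).

Lemma eval_index_halts_code X q y : eval X index_halts_code (pair q y) (index_halts q y).
Proof. eval_value_with ltac:(apply eval_const_index_code). reflexivity. Qed.

(* With oracle [0'], [agree] is 1 exactly when program [b] outputs the correct
   membership bit of [y] in [W_q]. *)
Definition agree_code : code :=
  ifz_code (CComp COracle (CComp index_halts_code (CPair (CComp CSnd CFst) CSnd)))
    (CComp COracle (CComp (index_outputs_code 0) (CPair (CComp CFst CFst) CSnd)))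
    (CComp COracle (CComp (index_outputs_code 1) (CPair (CComp CFst CFst) CSnd))).

Definition agree (X : nat -> Prop) (b q y : nat) : nat :=
  if chi (X (index_halts q y)) =? 0 then chi (X (index_outputs 0 b y))
  else chi (X (index_outputs 1 b y)).

Lemma eval_agree_code X b q y : eval X agree_code (pair (pair b q) y) (agree X b q y).
Proof.
  unfold agree_code, ifz_code.
  eval_value_with ltac:(first [ eval_arith | apply eval_COracle | apply eval_index_halts_code
                              | apply eval_index_outputs_code ]).
  reflexivity.
Qed.

Definition disagreement_code (b q : nat) : code :=
  CMu (CComp agree_code (CPair (CPair (const_code b) (const_code q)) CSnd)).

Definition index_disagreement (b q : nat) : nat :=
  pair 9 (pair 7 (pair (sealed_encode agree_code)
    (pair 6 (pair (pair 6 (pair (const_index b) (const_index q))) (sealed_encode CSnd))))).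

Lemma index_disagreement_encode b q : index_disagreement b q = encode (disagreement_code b q).
Proof. unfold index_disagreement. rewrite !sealed_encode_eq. reflexivity. Qed.

Definition index_disagreement_code : code :=
  CPair (const_code 9) (CPair (const_code 7) (CPair (const_code (sealed_encode agree_code))
    (CPair (const_code 6) (CPair (CPair (const_code 6)
      (CPair (CComp const_index_code CFst) (CComp const_index_code CSnd)))
      (const_code (sealed_encode CSnd)))))).

Lemma eval_index_disagreement_code X b q :
  eval X index_disagreement_code (pair b q) (index_disagreement b q).
Proof. eval_value_with ltac:(apply eval_const_index_code). reflexivity. Qed.

Definition extend_code (k : nat) (d b : code) : code :=
  ifz_code (eqb_const_code CFst k) d (CComp b CSnd).

Definition index_extend (k d b : nat) : nat :=
  pair 7 (pair (sealed_encode cond_code) (pair 6 (pair (pair 6 (pair (pair 7 (pair b (sealed_encode CSnd))) d))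
    (pair 7 (pair (sealed_encode eqb_code) (pair 6 (pair (sealed_encode CFst) (const_index k)))))))).

Lemma index_extend_encode k d b : index_extend k (encode d) (encode b) = encode (extend_code k d b).
Proof. unfold index_extend. rewrite !sealed_encode_eq. reflexivity. Qed.

Definition index_extend_code : code :=
  CPair (const_code 7) (CPair (const_code (sealed_encode cond_code)) (CPair (const_code 6) (CPair
    (CPair (const_code 6) (CPair (CPair (const_code 7) (CPair (CComp CSnd CSnd)
                                                              (const_code (sealed_encode CSnd))))
                                 (CComp CFst CSnd)))
    (CPair (const_code 7) (CPair (const_code (sealed_encode eqb_code)) (CPair (const_code 6)
      (CPair (const_code (sealed_encode CFst)) (CComp const_index_code CFst)))))))).

Lemma eval_index_extend_code X k d b : eval X index_extend_code (pair k (pair d b)) (index_extend k d b).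
Proof. eval_value_with ltac:(apply eval_const_index_code). reflexivity. Qed.

Lemma classic_least (P : nat -> Prop) :
  (exists n, P n) -> exists n, P n /\ forall m, m < n -> ~ P m.
Proof.
  intros [n Hn]. induction n as [n IH] using (well_founded_induction lt_wf).
  destruct (classic (exists m, m < n /\ P m)) as [[m [Hm Pm]]|Hno].
  - exact (IH m Hm Pm).
  - exists n. split; auto. intros m Hm Pm. apply Hno; eauto.
Qed.

Lemma jump_encode X c : jump X (encode c) <-> exists v, eval X c (encode c) v.
Proof.
  unfold jump, W. split.
  - intros [c' [v [Hc Hv]]]. apply encode_inj in Hc. subst. eauto.
  - intros [v Hv]. eauto.
Qed.

Lemma eval_CComp_inv X f g x v : eval X (CComp f g) x v -> exists a, eval X g x a /\ eval X f a v.
Proof. intro H. inversion H; subst. eauto. Qed.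

Lemma eval_CComp_const X c y x v : eval X (CComp c (const_code y)) x v <-> eval X c y v.
Proof.
  split.
  - intro H. apply eval_CComp_inv in H. destruct H as [a [Ha Hc]].
    rewrite (eval_det _ _ _ _ _ Ha (eval_const_code X y x)) in Hc. exact Hc.
  - intro H. econstructor; [apply eval_const_code | auto].
Qed.

Lemma jump_index_halts X q y : jump X (index_halts q y) <-> exists c v, encode c = q /\ eval X c y v.
Proof.
  split.
  - intros [c' [v [Hc Hv]]]. unfold index_halts in Hc. apply encode_CComp_inv in Hc.
    destruct Hc as [c1 [c2 [-> [H1 H2]]]]. apply encode_inj in H2. subst c2.
    apply eval_CComp_const in Hv. eauto.
  - intros [c [v [<- Hv]]]. exists (CComp c (const_code y)), v.
    rewrite index_halts_encode. split; [reflexivity | apply eval_CComp_const; auto].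
Qed.

Lemma jump_index_outputs X j b y : jump X (index_outputs j b y) <-> exists c, encode c = b /\ eval X c y j.
Proof.
  split.
  - intros [c' [v [Hc Hv]]]. unfold index_outputs in Hc.
    apply encode_CComp_inv in Hc. destruct Hc as [c1 [c2 [-> [H1 H2]]]].
    rewrite sealed_encode_eq in H1. apply encode_inj in H1. subst c1. apply encode_CComp_inv in H2.
    destruct H2 as [c3 [c4 [-> [H3 H4]]]]. apply encode_inj in H4. subst c4.
    apply eval_CComp_inv in Hv. destruct Hv as [a [Ha Hj]].
    apply eval_halt_iff_eq_code in Hj. destruct Hj as [-> _].
    apply eval_CComp_const in Ha. eauto.
  - intros [c [<- Hv]]. exists (CComp (halt_iff_eq_code j) (CComp c (const_code y))), 0.
    rewrite index_outputs_encode. split; [reflexivity|].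
    econstructor; [apply eval_CComp_const; eauto | apply eval_halt_iff_eq_code; auto].
Qed.

Lemma agree_01 X b q y : agree X b q y = 0 \/ agree X b q y = 1.
Proof. unfold agree. destruct (chi _ =? 0); apply chi_01. Qed.

Lemma agree_1 X b q y : agree X b q y = 1 <->
  (X (index_halts q y) /\ X (index_outputs 1 b y)) \/ (~ X (index_halts q y) /\ X (index_outputs 0 b y)).
Proof.
  unfold agree. destruct (classic (X (index_halts q y))) as [H|H].
  - rewrite (proj2 (chi_1 _) H). cbn [Nat.eqb]. rewrite chi_1. tauto.
  - rewrite (proj2 (chi_0 _) H). cbn [Nat.eqb]. rewrite chi_1. tauto.
Qed.

Lemma eval_disagreement_code X b q x :
  (exists v, eval X (disagreement_code b q) x v) <-> exists y, agree X b q y = 0.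
Proof.
  assert (Hstep : forall y, eval X (CComp agree_code (CPair (CPair (const_code b) (const_code q)) CSnd))
                              (pair x y) (agree X b q y)).
  { intro y. econstructor; [|apply eval_agree_code].
    apply ev_pair; [apply ev_pair; apply eval_const_code | apply ev_snd]. }
  split.
  - intros [v Hv]. inversion Hv; subst. exists v. eapply eval_det; [apply Hstep | eauto].
  - intro H. apply classic_least in H. destruct H as [n [Hn Hmin]]. exists n. constructor.
    + rewrite <- Hn. apply Hstep.
    + intros m Hlt. exists 0. destruct (agree_01 X b q m) as [|E]; [exfalso; eapply Hmin; eauto|].
      rewrite <- E. apply Hstep.
Qed.

Lemma jump_jump_index_disagreement X b q :
  jump (jump X) (index_disagreement b q) <-> exists y, agree (jump X) b q y = 0.
Proof. rewrite index_disagreement_encode, jump_encode. apply eval_disagreement_code. Qed.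

Lemma no_disagreement_iff_computes b q (A : nat -> Prop) :
  (forall y, jump empty_set (index_halts q y) <-> A y) ->
  (~ (exists y, agree (jump empty_set) b q y = 0) <->
   exists c, encode c = b /\ computes empty_set c A).
Proof.
  intros Hq. split.
  - intros Hn. assert (Hall : forall y, agree (jump empty_set) b q y = 1).
    { intro y. destruct (agree_01 (jump empty_set) b q y); auto. exfalso; eauto. }
    assert (Hb : exists c, encode c = b).
    { pose proof (proj1 (agree_1 _ _ _ _) (Hall 0)) as H0. rewrite !jump_index_outputs in H0.
      destruct H0 as [[_ [c [Hc _]]]|[_ [c [Hc _]]]]; eauto. }
    destruct Hb as [c Hc]. exists c. split; auto. intro y.
    pose proof (proj1 (agree_1 _ _ _ _) (Hall y)) as Hy. rewrite !jump_index_outputs, Hq in Hy.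
    split; intro HA; destruct Hy as [[HA' [c' [Hc' Hv]]]|[HA' [c' [Hc' Hv]]]]; try tauto;
      rewrite <- Hc in Hc'; apply encode_inj in Hc'; subst; auto.
  - intros [c [<- Hc]] [y Hy]. enough (agree (jump empty_set) (encode c) q y = 1) by lia.
    apply agree_1. rewrite !jump_index_outputs, Hq. destruct (Hc y).
    destruct (classic (A y)); [left | right]; eauto.
Qed.

Lemma chi_iff P Q : (P <-> Q) -> chi P = chi Q.
Proof.
  intro H. unfold chi.
  destruct (excluded_middle_informative P), (excluded_middle_informative Q); tauto.
Qed.

Lemma computes_chi X c A : computes X c A <-> forall y, eval X c y (chi (A y)).
Proof.
  split; intros H y.
  - destruct (H y) as [H1 H0]. unfold chi.
    destruct (excluded_middle_informative (A y)); auto.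
  - specialize (H y). split; intro Hy.
    + rewrite (proj2 (chi_1 _) Hy) in H. exact H.
    + rewrite (proj2 (chi_0 _) Hy) in H. exact H.
Qed.

Lemma computes_oracle_query X A g :
  (forall y, exists q, eval X g y q /\ (X q <-> A y)) -> computes X (CComp COracle g) A.
Proof.
  intro Hg. apply computes_chi. intro y. destruct (Hg y) as [q [Hq HA]].
  econstructor; [exact Hq|]. rewrite <- (chi_iff _ _ HA). apply eval_COracle.
Qed.

Lemma below_iff C n z : below C n z <-> pi1 z < n /\ C z.
Proof.
  unfold below. split.
  - intros [m [y [-> [Hm Hc]]]]. rewrite pi1_pair. auto.
  - intros [Hm Hc]. exists (pi1 z), (pi2 z). rewrite pair_pi. auto.
Qed.

Lemma computes_below_0 Y C : computes Y CZero (below C 0).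
Proof. intro z. split; [rewrite below_iff; lia | intros; constructor]. Qed.

Lemma computes_extend_code Y C k dc bc :
  computes Y dc (below C k) -> computes Y bc (column C k) ->
  computes Y (extend_code k dc bc) (below C (S k)).
Proof.
  rewrite !computes_chi. intros Hd Hb z.
  eapply eval_value.
  - unfold extend_code, ifz_code, eqb_const_code.
    eval_with ltac:(first [eval_arith | apply Hd | apply Hb]).
  - unfold column. destruct (Nat.eqb_spec (pi1 z) k) as [<-|Hk]; cbn [Nat.eqb];
      apply chi_iff; rewrite !below_iff.
    + rewrite pair_pi. split; [intro; split; [lia | assumption] | intros [_ Hz]; exact Hz].
    + split; intros [Hz Cz]; split; auto; lia.
Qed.

Lemma computes_1 X c A y : computes X c A -> eval X c y 1 -> A y.
Proof.
  intros Hc H. apply NNPP. intro Hy. pose proof (eval_det _ _ _ _ _ H (proj2 (Hc y) Hy)). discriminate.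
Qed.

(* Substituting a program for [Z] into [W_e] needs no oracle, so the result is c.e. in
   the empty set (and in any other oracle [X]). *)
Lemma jump_index_halts_subst X Z dc e y :
  (forall Y, computes Y dc Z) -> jump X (index_halts (subst_index (encode dc) e) y) <-> W Z e y.
Proof.
  intro Hdc. rewrite jump_index_halts. unfold W.
  destruct (classic (exists c, encode c = e)) as [[c <-]|Hno].
  - rewrite subst_index_encode. split.
    + intros [c' [v [Hc' Hv]]]. apply encode_inj in Hc'. subst c'.
      exists c, v. split; auto. eapply eval_subst_oracle; eauto.
    + intros [c' [v [Hc' Hv]]]. apply encode_inj in Hc'. subst c'.
      exists (subst_oracle c dc), v. split; auto. eapply eval_subst_oracle; eauto.
  - split.
    + intros [c' [v [Hc' _]]]. symmetry in Hc'. destruct (subst_index_valid _ _ _ Hc') as [c ->].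
      exfalso; eauto.
    + intros [c [v [Hc _]]]. exfalso; eauto.
Qed.

Lemma turing_le_W_jump Z e X : computable Z -> turing_le (W Z e) (jump X).
Proof.
  intros [dc Hdc]. set (q := subst_index (encode (erase_oracle dc)) e).
  exists (CComp COracle (CComp index_halts_code (CPair (const_code q) CId))).
  apply computes_oracle_query. intro y. exists (index_halts q y). split.
  - eapply ev_comp; [apply ev_pair; [apply eval_const_code | constructor] | apply eval_index_halts_code].
  - apply jump_index_halts_subst, computes_erase_oracle, Hdc.
Qed.

Lemma double_jump_test_iff b q A :
  (forall y, jump empty_set (index_halts q y) <-> A y) ->
  ~ zero_double_jump (index_disagreement (subst_index (encode CZero) b) q) <->
  exists c, b = encode c /\ computes empty_set (erase_oracle c) A.
Proof.
  intro Hq. unfold zero_double_jump.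
  rewrite jump_jump_index_disagreement, (no_disagreement_iff_computes _ _ _ Hq). split.
  - intros [bc [Hbc Hc]]. destruct (subst_index_valid _ _ _ (eq_sym Hbc)) as [c ->].
    rewrite subst_index_encode in Hbc. apply encode_inj in Hbc. subst bc. eauto.
  - intros [c [-> Hc]]. exists (erase_oracle c). split; [symmetry; apply subst_index_encode | exact Hc].
Qed.

Lemma turing_le_ext A B Z : (forall y, A y <-> B y) -> turing_le A Z -> turing_le B Z.
Proof. intros HAB [c Hc]. exists c. intro y. rewrite <- HAB. apply Hc. Qed.

Lemma turing_le_refl A : turing_le A A.
Proof.
  exists (CComp COracle CId). apply computes_oracle_query. intro y.
  exists y. split; [constructor | reflexivity].
Qed.

Lemma turing_le_column C n : turing_le (column C n) C.
Proof.
  exists (CComp COracle (CPair (const_code n) CId)). apply computes_oracle_query. intro y.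
  exists (pair n y). split; [apply ev_pair; [apply eval_const_code | constructor] | reflexivity].
Qed.

Section UniformIndices.

Variables (C : nat -> Prop) (f : nat -> nat) (cf : code).
Hypothesis eval_cf : forall n, eval empty_set cf n (f n).
Hypothesis C_REA : forall n y, column C n y <-> W (below C n) (f n) y.
Hypothesis column_computable : forall n, computable (below C n) -> computable (column C n).

Definition f_code : code := erase_oracle cf.

Lemma eval_f_code Y n : eval Y f_code n (f n).
Proof.
  apply (eval_oracle_free empty_set); [apply oracle_free_erase_oracle|].
  apply (eval_subst_oracle empty_set); [apply computes_CZero_empty | apply eval_cf].
Qed.

(* The codes below read the input [<z, <k, d>>], with [d] an index for [C^[<k]]. *)
Definition column_query_code : code :=
  CComp subst_index_code (CPair (CComp CSnd CSnd) (CComp f_code (CComp CFst CSnd))).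

Definition column_test_code : code :=
  CComp COracle (CComp index_disagreement_code
    (CPair (CComp subst_index_code (CPair (const_code (encode CZero)) CSnd)) (CComp CSnd CFst))).

Definition extend_index_code : code :=
  CComp index_extend_code
    (CPair (CComp CFst (CComp CSnd (CComp CFst CFst)))
      (CPair (CComp CSnd (CComp CSnd (CComp CFst CFst)))
        (CComp subst_index_code (CPair (const_code (encode CZero)) CSnd)))).

Definition next_index_code : code :=
  CComp (CComp extend_index_code (CPair CId (CMu column_test_code))) (CPair CId column_query_code).

Definition below_index_code : code := CPrim CZero next_index_code.

Definition indexes_below (k d : nat) : Prop :=
  exists dc, encode dc = d /\ forall Y, computes Y dc (below C k).

Lemma eval_next_index_code Y z k d b :
  let test m := Y (index_disagreement (subst_index (encode CZero) m) (subst_index d (f k))) in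
  ~ test b -> (forall m, m < b -> test m) ->
  eval Y next_index_code (pair z (pair k d)) (index_extend k d (subst_index (encode CZero) b)).
Proof.
  intros test Hb Hmin.
  assert (Htest : forall m, eval Y column_test_code
                    (pair (pair (pair z (pair k d)) (subst_index d (f k))) m) (chi (test m))).
  { intro m. unfold column_test_code.
    eval_value_with ltac:(first [ apply eval_subst_index_code | apply eval_index_disagreement_code
                          | apply eval_COracle ]).
    reflexivity. }
  eapply ev_comp; [apply ev_pair; [constructor|]|].
  - unfold column_query_code. eval_with ltac:(first [apply eval_subst_index_code | apply eval_f_code]).
  - eapply ev_comp; [apply ev_pair; [constructor|]|].
    + constructor.
      * rewrite <- (proj2 (chi_0 _) Hb). apply Htest.
      * intros m Hm. exists 0. rewrite <- (proj2 (chi_1 _) (Hmin m Hm)). apply Htest.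
    + unfold extend_index_code.
      eval_with ltac:(first [apply eval_subst_index_code | apply eval_index_extend_code]).
Qed.

Lemma next_index_spec k d : indexes_below k d ->
  exists d', (forall z, eval zero_double_jump next_index_code (pair z (pair k d)) d') /\
             indexes_below (S k) d'.
Proof.
  intros [dc [<- Hdc]]. set (q := subst_index (encode dc) (f k)).
  assert (HQ : forall y, jump empty_set (index_halts q y) <-> column C k y).
  { intro y. rewrite C_REA. apply jump_index_halts_subst, Hdc. }
  set (test b := ~ zero_double_jump (index_disagreement (subst_index (encode CZero) b) q)).
  assert (Hex : exists b, test b).
  { destruct (column_computable k) as [c0 Hc0]; [exists dc; apply Hdc|].
    exists (encode c0). apply (double_jump_test_iff _ _ _ HQ).
    exists c0. split; [reflexivity | apply computes_erase_oracle, Hc0]. }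
  destruct (classic_least _ Hex) as [b [Hb Hmin]].
  destruct (proj1 (double_jump_test_iff _ _ _ HQ) Hb) as [cb [-> Hcb]].
  exists (index_extend k (encode dc) (subst_index (encode CZero) (encode cb))). split.
  - intro z. apply eval_next_index_code; [exact Hb | intros m Hm; apply NNPP, Hmin, Hm].
  - rewrite subst_index_encode, index_extend_encode. eexists; split; [reflexivity|].
    intro Y. apply computes_extend_code; [apply Hdc|].
    apply computes_oracle_free; [apply oracle_free_erase_oracle | exact Hcb].
Qed.

Lemma below_index_spec z k :
  exists d, eval zero_double_jump below_index_code (pair z k) d /\ indexes_below k d.
Proof.
  induction k as [|k [d [Hd Hk]]].
  - exists 0. split; [repeat constructor|].
    exists CZero. split; [reflexivity | intro; apply computes_below_0].
  - destruct (next_index_spec k d Hk) as [d' [Hd' Hk']].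
    exists d'. split; [econstructor; [exact Hd | apply Hd'] | exact Hk'].
Qed.

(* An index for [C^[<k+1]], with [k] the column of [z], decides [z]. *)
Lemma computes_double_jump :
  computes zero_double_jump
    (CComp COracle (CComp (index_outputs_code 1)
       (CPair (CComp below_index_code (CPair CId (CComp CSucc CFst))) CId))) C.
Proof.
  apply computes_oracle_query. intro z.
  destruct (below_index_spec z (S (pi1 z))) as [d [Hd [dc [<- Hdc]]]].
  exists (index_outputs 1 (encode dc) z). split.
  - eapply ev_comp; [|apply eval_index_outputs_code]. apply ev_pair; [|constructor].
    eapply ev_comp; [|exact Hd]. apply ev_pair; [constructor|].
    eapply ev_comp; [apply eval_pi1 | constructor].
  - unfold zero_double_jump. rewrite jump_index_outputs. split.
    + intros [c [Hc Hv]]. apply encode_inj in Hc. subst c.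
      apply (computes_1 _ _ _ _ (Hdc _)), below_iff in Hv. tauto.
    + intro Hz. exists dc. split; [reflexivity|]. apply (Hdc _), below_iff. auto.
Qed.

End UniformIndices.

Theorem proposition1p3 (C : nat -> Prop) :
  REA_omega C -> ~ computable C ->
  exists B : nat -> Prop,
    ~ computable B /\ turing_le B C /\ turing_le B zero_double_jump.
Proof.
  intros [f [[cf Hf] HREA]] Hnc.
  destruct (classic (exists n, computable (below C n) /\ ~ computable (column C n)))
    as [[n [Hbelow Hcol]]|Hno].
  - exists (column C n). split; [exact Hcol|]. split; [apply turing_le_column|].
    apply (turing_le_ext (W (below C n) (f n))); [intro y; symmetry; apply HREA|].
    apply turing_le_W_jump, Hbelow.
  - exists C. split; [exact Hnc|]. split; [apply turing_le_refl|].
    eexists. apply (computes_double_jump C f cf); [exact Hf | exact HREA|].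
    intros n Hn. apply NNPP. intro Hcol. apply Hno. eauto.
Qed.
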